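(* Let $\mathbb K$ be an algebraically closed field, let $n\ge 1$ and $\mu\ge 0$ be integers with $\mu<\lfloor n/2\rfloor$, and let $(a,b,c)\in\mathcal P^\mu_n$. Let $\epsilon$ be a new variable. Then there exists $(a_\epsilon,b_\epsilon,c_\epsilon)\in\mathbb K[\epsilon,t]^3$ such that, regarded as univariate polynomials in $t$ over $\mathbb K(\epsilon)$, the following hold: (i) $\gcd(a_\epsilon,b_\epsilon,c_\epsilon)=1$; (ii) $\max\{\deg_t a_\epsilon,\deg_t b_\epsilon,\deg_t c_\epsilon\}=n$; (iii) $\mu(a_\epsilon,b_\epsilon,c_\epsilon)=\mu(a,b,c)+1$ (the class being computed over the field $\mathbb K(\epsilon)$); (iv) $(a_\epsilon,b_\epsilon,c_\epsilon)|_{\epsilon=0}=(a,b,c)$.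
   Context: For a field $F$ and $a,b,c\in F[t]$, the syzygy module is $\mathrm{Syz}(a,b,c)=\{(A,B,C)\in F[t]^3: Aa+Bb+Cc=0\}$. The degree of a vector $(A,B,C)$ is $\deg(A,B,C)=\max\{\deg A,\deg B,\deg C\}$. The class of $(a,b,c)$ is $\mu(a,b,c)=\min\{\deg(A,B,C): (A,B,C)\in \mathrm{Syz}(a,b,c)\setminus\{0\}\}$. $\mathbb K[t]_n$ denotes polynomials of degree $\le n$; $\mathcal P_n\subset \mathbb K[t]_n^3$ is the set of triples $(a,b,c)$ with $c\neq 0$, $\gcd(a,b,c)=1$ and $\max\{\deg a,\deg b,\deg c\}=n$; and $\mathcal P^\mu_n=\{(a,b,c)\in\mathcal P_n:\mu(a,b,c)=\mu\}$. *)

From HB Require Import structures.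
From mathcomp Require Import all_boot all_order all_algebra fraction.
Set Implicit Arguments. Unset Strict Implicit. Unset Printing Implicit Defensive.
Import GRing.Theory.
Local Open Scope ring_scope.

(* degree of a vector (A,B,C) : max of the degrees; for nonzero vectors this is
   (max of sizes) - 1 since size = degree + 1. *)
Definition deg3 (F : fieldType) (A B C : {poly F}) : nat :=
  (maxn (size A) (maxn (size B) (size C))).-1.

Definition syz (F : fieldType) (a b c A B C : {poly F}) : Prop :=
  A * a + B * b + C * c = 0.

(* is_class a b c m  <->  mu(a,b,c) = m : the minimum degree of a nonzero syzygy. *)
Definition is_class (F : fieldType) (a b c : {poly F}) (m : nat) : Prop :=
  (exists A B C : {poly F},
      syz a b c A B C /\ (A, B, C) != (0, 0, 0) /\ deg3 A B C = m) /\
  (forall A B C : {poly F},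
      syz a b c A B C -> (A, B, C) != (0, 0, 0) -> (m <= deg3 A B C)%N).

Definition gcd3_one (F : fieldType) (a b c : {poly F}) : Prop :=
  gcdp (gcdp a b) c %= 1.

Definition inP (F : fieldType) (n mu : nat) (a b c : {poly F}) : Prop :=
  [/\ c != 0, gcd3_one a b c, deg3 a b c = n & is_class a b c mu].

(* K[eps,t] = {poly {poly K}} (outer variable t, coefficients in K[eps]);
   regarded over K(eps) = {fraction {poly K}}. *)
Definition over_frac (K : fieldType) (p : {poly {poly K}}) :
  {poly {fraction {poly K}}} := map_poly (@tofrac _) p.

Definition at_eps0 (K : fieldType) (p : {poly {poly K}}) : {poly K} :=
  map_poly (fun q : {poly K} => q.[0]) p.

From HB Require Import structures.
From mathcomp Require Import all_boot all_order all_algebra fraction.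
From mathcomp Require Import zify ring.
Set Implicit Arguments. Unset Strict Implicit. Unset Printing Implicit Defensive.
Local Open Scope ring_scope.
Import GRing.Theory.

(* Over a field, when gcd(a, b, c) = 1 the cross product of two syzygies of (a, b, c) is a
   polynomial multiple of (a, b, c), hence it is either 0 or of degree at least n.  This
   yields syzygies p, r with (a, b, c) = p x r, deg p = mu and deg r <= n - mu.  Perturb p
   into P = p + eps t^(mu+1) L, where L is the vector of coefficients of t^(n-mu) in r,
   and put V = P x r, so that V = (a, b, c) at eps = 0.  Over K(eps), both P (of degree
   mu + 1) and Q = eps r - t^(n-2mu-1) P (of degree < n - mu) are syzygies of V, with
   P x Q = eps V != 0.  A syzygy of degree <= mu would be parallel to both P and Q by the
   degree bound, so the class of V is mu + 1.  Finally p.V = -eps t^(mu+1) L.(a, b, c) is a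
   nonzero polynomial in t alone, so a common factor of V would have a root z in K, and
   z would be a common root of a, b and c. *)

(* The cross product [S x T] of triples is
   [(det2 S2 S3 T2 T3, det2 S3 S1 T3 T1, det2 S1 S2 T1 T2)]. *)
Definition det2 (R : pzRingType) (x y z w : R) := x * w - y * z.

Section Syzygies.
Variable F : fieldType.
Implicit Types (a b c g l p q r u v w x y z A B C S T : {poly F}).

Lemma deg3_leq A B C d :
  (deg3 A B C <= d)%N = [&& size A <= d.+1, size B <= d.+1 & size C <= d.+1]%N.
Proof. by rewrite /deg3; apply/idP/and3P => [h|[]]; [split|]; lia. Qed.

Lemma size_leq_deg3 A B C :
  [/\ size A <= (deg3 A B C).+1, size B <= (deg3 A B C).+1
    & size C <= (deg3 A B C).+1]%N.
Proof. by apply/and3P; rewrite -deg3_leq. Qed.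

Lemma triple_neq0 A B C :
  (A, B, C) != (0, 0, 0) -> (0 < size A)%N || (0 < size B)%N || (0 < size C)%N.
Proof.
rewrite !size_poly_gt0; apply: contraR.
by rewrite !negb_or !negbK => /andP[/andP[/eqP-> /eqP->] /eqP->].
Qed.

Lemma size_leq_coef0 p m : (size p <= m.+1)%N -> p`_m = 0 -> (size p <= m)%N.
Proof.
rewrite leq_eqVlt => /orP[/eqP sp pm0|//].
have /eqP : lead_coef p = 0 by rewrite lead_coefE sp.
by rewrite lead_coef_eq0 => /eqP->; rewrite size_poly0.
Qed.

Lemma size_mull_geq l x : l != 0 -> (size x <= size (l * x)%R)%N.
Proof.
move=> l0; have [->|x0] := eqVneq x 0; first by rewrite mulr0.
have : (0 < size l)%N by rewrite size_poly_gt0.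
by rewrite size_mul //; move: (size l) (size x); lia.
Qed.

Lemma size_mulr_leq_pred q g : (1 < size g)%N -> (size q <= (size (q * g)%R).-1)%N.
Proof.
move=> g1; have [->|q0] := eqVneq q 0; first by rewrite size_poly0.
have g0 : g != 0 by rewrite -size_poly_gt0; lia.
have : (0 < size q)%N by rewrite size_poly_gt0.
by rewrite size_mul //; move: (size q) (size g) g1; lia.
Qed.

Lemma gcd3_one_Bezout a b c :
  gcd3_one a b c -> exists X1 X2 X3, X1 * a + X2 * b + X3 * c = 1.
Proof.
rewrite /gcd3_one -size_poly_eq1 => gabc1.
have /Bezout_eq1_coprimepP[[u1 u2] /= e] : coprimep (gcdp a b) c by [].
have [[w1 w2]] := Bezoutp a b; case/eqpP=> [[c1 c2]] /andP /= [_ c2n0] e2.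
have eg : gcdp a b = (c2^-1 * c1) *: (w1 * a + w2 * b).
  by rewrite -scalerA e2 scalerA mulVf // scale1r.
exists (u1 * ((c2^-1 * c1)%:P * w1)), (u1 * ((c2^-1 * c1)%:P * w2)), u2.
by rewrite -e eg -mul_polyC; ring.
Qed.

Lemma size_det2 x y z w s t :
  (size x <= s)%N -> (size y <= s)%N -> (size z <= t)%N -> (size w <= t)%N ->
  (size (det2 x y z w) <= (s + t).-1)%N.
Proof.
move=> sx sy sz sw; apply: leq_trans (size_polyD _ _) _.
rewrite size_polyN geq_max; have := size_polyMleq x w; have := size_polyMleq y z.
by move: (size x) (size y) (size z) (size w) (size (x * w)) (size (y * z)) sx sy sz sw; lia.
Qed.

Lemma deg3_cross S1 S2 S3 T1 T2 T3 :
  (deg3 (det2 S2 S3 T2 T3) (det2 S3 S1 T3 T1) (det2 S1 S2 T1 T2)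
    <= deg3 S1 S2 S3 + deg3 T1 T2 T3)%N.
Proof.
have [s1 s2 s3] := size_leq_deg3 S1 S2 S3; have [t1 t2 t3] := size_leq_deg3 T1 T2 T3.
have le_sum : (((deg3 S1 S2 S3).+1 + (deg3 T1 T2 T3).+1).-1
                <= (deg3 S1 S2 S3 + deg3 T1 T2 T3).+1)%N by rewrite addSn addnS.
rewrite deg3_leq; apply/and3P; split; exact: leq_trans (size_det2 _ _ _ _) le_sum.
Qed.

Lemma cross_syz_multiple a b c S1 S2 S3 T1 T2 T3 :
  gcd3_one a b c -> syz a b c S1 S2 S3 -> syz a b c T1 T2 T3 ->
  exists l, [/\ det2 S2 S3 T2 T3 = l * a, det2 S3 S1 T3 T1 = l * b
              & det2 S1 S2 T1 T2 = l * c].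
Proof.
move=> /gcd3_one_Bezout[X1 [X2 [X3 X_abc]]] syzS syzT.
set W1 := det2 S2 S3 T2 T3; set W2 := det2 S3 S1 T3 T1; set W3 := det2 S1 S2 T1 T2.
exists (X1 * W1 + X2 * W2 + X3 * W3).
(* [W - (X.W) (a, b, c)] is [W (1 - X.(a, b, c))] plus multiples of [S.(a, b, c)]
   and [T.(a, b, c)] *)
set sv := S1 * a + S2 * b + S3 * c; set tv := T1 * a + T2 * b + T3 * c.
have [sv0 tv0] : sv = 0 /\ tv = 0 by [].
set Xv := X1 * a + X2 * b + X3 * c.
split; apply/eqP; rewrite -subr_eq0; apply/eqP.
- transitivity (W1 * (1 - Xv) + X2 * (T3 * sv - S3 * tv) - X3 * (T2 * sv - S2 * tv)).
    by rewrite /Xv /sv /tv /W1 /W2 /W3 /det2; ring.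
  by rewrite /Xv X_abc sv0 tv0; ring.
- transitivity (W2 * (1 - Xv) + X3 * (T1 * sv - S1 * tv) - X1 * (T3 * sv - S3 * tv)).
    by rewrite /Xv /sv /tv /W1 /W2 /W3 /det2; ring.
  by rewrite /Xv X_abc sv0 tv0; ring.
- transitivity (W3 * (1 - Xv) + X1 * (T2 * sv - S2 * tv) - X2 * (T1 * sv - S1 * tv)).
    by rewrite /Xv /sv /tv /W1 /W2 /W3 /det2; ring.
  by rewrite /Xv X_abc sv0 tv0; ring.
Qed.

Lemma cross_syz_eq0 a b c S1 S2 S3 T1 T2 T3 :
  gcd3_one a b c -> syz a b c S1 S2 S3 -> syz a b c T1 T2 T3 ->
  (deg3 (det2 S2 S3 T2 T3) (det2 S3 S1 T3 T1) (det2 S1 S2 T1 T2) < deg3 a b c)%N ->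
  (det2 S2 S3 T2 T3, det2 S3 S1 T3 T1, det2 S1 S2 T1 T2) = (0, 0, 0).
Proof.
move=> gabc syzS syzT; have [l [-> -> ->]] := cross_syz_multiple gabc syzS syzT.
have [->|l0] := eqVneq l 0; first by rewrite !mul0r.
have := size_mull_geq a l0; have := size_mull_geq b l0; have := size_mull_geq c l0.
rewrite /deg3; move: (size a) (size b) (size c) (size (l * a)) (size (l * b)) (size (l * c)).
by lia.
Qed.

Lemma cross_eq0_trans S1 S2 S3 P1 P2 P3 Q1 Q2 Q3 :
  (S1, S2, S3) != (0, 0, 0) ->
  (det2 S2 S3 P2 P3, det2 S3 S1 P3 P1, det2 S1 S2 P1 P2) = (0, 0, 0) ->
  (det2 S2 S3 Q2 Q3, det2 S3 S1 Q3 Q1, det2 S1 S2 Q1 Q2) = (0, 0, 0) ->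
  (det2 P2 P3 Q2 Q3, det2 P3 P1 Q3 Q1, det2 P1 P2 Q1 Q2) = (0, 0, 0).
Proof.
move=> S0 [SP1 SP2 SP3] [SQ1 SQ2 SQ3].
(* the coordinates of [S_i (P x Q)] are combinations of those of [S x P] and [S x Q] *)
have cancel Si z : Si != 0 -> Si * z = 0 -> z = 0.
  by move=> /negPf Si0 /eqP; rewrite mulf_eq0 Si0 => /eqP.
have [S10|S1n0] := eqVneq S1 0; last first.
  congr (_, _, _); apply: (cancel S1) => //.
  - transitivity (P1 * det2 S2 S3 Q2 Q3 + det2 S1 S2 P1 P2 * Q3 + det2 S3 S1 P3 P1 * Q2);
      [rewrite /det2; ring | rewrite SQ1 SP3 SP2; ring].
  - transitivity (P1 * det2 S3 S1 Q3 Q1 - det2 S3 S1 P3 P1 * Q1);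
      [rewrite /det2; ring | rewrite SQ2 SP2; ring].
  - transitivity (P1 * det2 S1 S2 Q1 Q2 - det2 S1 S2 P1 P2 * Q1);
      [rewrite /det2; ring | rewrite SQ3 SP3; ring].
have [S20|S2n0] := eqVneq S2 0; last first.
  congr (_, _, _); apply: (cancel S2) => //.
  - transitivity (P2 * det2 S2 S3 Q2 Q3 - det2 S2 S3 P2 P3 * Q2);
      [rewrite /det2; ring | rewrite SQ1 SP1; ring].
  - transitivity (P2 * det2 S3 S1 Q3 Q1 + det2 S2 S3 P2 P3 * Q1 + det2 S1 S2 P1 P2 * Q3);
      [rewrite /det2; ring | rewrite SQ2 SP1 SP3; ring].
  - transitivity (P2 * det2 S1 S2 Q1 Q2 - det2 S1 S2 P1 P2 * Q2);
      [rewrite /det2; ring | rewrite SQ3 SP3; ring].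
have [S30|S3n0] := eqVneq S3 0; last first.
  congr (_, _, _); apply: (cancel S3) => //.
  - transitivity (P3 * det2 S2 S3 Q2 Q3 - det2 S2 S3 P2 P3 * Q3);
      [rewrite /det2; ring | rewrite SQ1 SP1; ring].
  - transitivity (P3 * det2 S3 S1 Q3 Q1 - det2 S3 S1 P3 P1 * Q3);
      [rewrite /det2; ring | rewrite SQ2 SP2; ring].
  - transitivity (P3 * det2 S1 S2 Q1 Q2 + det2 S3 S1 P3 P1 * Q2 + det2 S2 S3 P2 P3 * Q1);
      [rewrite /det2; ring | rewrite SQ3 SP2 SP1; ring].
by move: S0; rewrite S10 S20 S30 eqxx.
Qed.

Lemma min_syz_primitive a b c p1 p2 p3 :
  syz a b c p1 p2 p3 -> (p1, p2, p3) != (0, 0, 0) ->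
  (forall A B C, syz a b c A B C -> (A, B, C) != (0, 0, 0) ->
     (deg3 p1 p2 p3 <= deg3 A B C)%N) ->
  gcd3_one p1 p2 p3.
Proof.
move=> syzp p0 pmin; rewrite /gcd3_one -size_poly_eq1.
set g := gcdp (gcdp p1 p2) p3.
have g0 : g != 0.
  apply: contraNneq p0 => /eqP; rewrite !gcdp_eq0 => /andP[/andP[]].
  by move=> /eqP-> /eqP-> /eqP->.
apply: contraT => g_nunit.
have g1 : (1 < size g)%N.
  have : (0 < size g)%N by rewrite size_poly_gt0.
  by move: g_nunit; lia.
have [e1 e2 e3] : [/\ p1 %/ g * g = p1, p2 %/ g * g = p2 & p3 %/ g * g = p3].
  by split; apply: divpK; rewrite ?dvdp_gcdr //;
    apply: dvdp_trans (dvdp_gcdl _ _) _; rewrite ?dvdp_gcdl ?dvdp_gcdr.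
set q1 := p1 %/ g in e1; set q2 := p2 %/ g in e2; set q3 := p3 %/ g in e3.
have syzq : syz a b c q1 q2 q3.
  apply: (mulIf g0); rewrite mul0r -[RHS]syzp -e1 -e2 -e3; ring.
have q0 : (q1, q2, q3) != (0, 0, 0).
  by apply: contraNneq p0 => -[q10 q20 q30]; rewrite -e1 -e2 -e3 q10 q20 q30 !mul0r.
have := pmin _ _ _ syzq q0; have := triple_neq0 q0.
have := size_mulr_leq_pred q1 g1; have := size_mulr_leq_pred q2 g1.
have := size_mulr_leq_pred q3 g1; rewrite e1 e2 e3 /deg3.
by move: (size q1) (size q2) (size q3) (size p1) (size p2) (size p3); lia.
Qed.

Lemma is_class_of_cross a b c P1 P2 P3 Q1 Q2 Q3 m :
  gcd3_one a b c -> syz a b c P1 P2 P3 -> syz a b c Q1 Q2 Q3 ->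
  (det2 P2 P3 Q2 Q3, det2 P3 P1 Q3 Q1, det2 P1 P2 Q1 Q2) != (0, 0, 0) ->
  (deg3 P1 P2 P3 <= m.+1)%N -> (m + m.+1 < deg3 a b c)%N ->
  (m + deg3 Q1 Q2 Q3 < deg3 a b c)%N ->
  is_class a b c m.+1.
Proof.
move=> gabc syzP syzQ PQ0 degP mP mQ.
have class_lb A B C : syz a b c A B C -> (A, B, C) != (0, 0, 0) ->
    (m.+1 <= deg3 A B C)%N.
  move=> syzS S0; rewrite ltnNge; apply/negP => degS.
  have SP0 := cross_syz_eq0 gabc syzS syzP
    (leq_ltn_trans (deg3_cross _ _ _ _ _ _) (leq_ltn_trans (leq_add degS degP) mP)).
  have SQ0 := cross_syz_eq0 gabc syzS syzQ
    (leq_ltn_trans (deg3_cross _ _ _ _ _ _) (leq_ltn_trans (leq_add degS (leqnn _)) mQ)).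
  by move: PQ0; rewrite (cross_eq0_trans S0 SP0 SQ0) eqxx.
have P0 : (P1, P2, P3) != (0, 0, 0).
  by apply: contraNneq PQ0 => -[-> -> ->]; rewrite /det2 !mul0r subrr.
split=> //; exists P1, P2, P3; split=> //; split=> //.
by apply/eqP; rewrite eqn_leq degP class_lb.
Qed.

Lemma size_cofactor_leq p r s d N :
  size p = d.+1 -> (size (p * r - s)%R <= N)%N -> (size s <= N)%N -> (size r <= N - d)%N.
Proof.
move=> sp sprs ss; have [->|r0] := eqVneq r 0; first by rewrite size_poly0.
have : (size (p * r)%R <= N)%N.
  rewrite -[p * r](subrK s); apply: leq_trans (size_polyD _ _) _.
  by rewrite geq_max sprs.
have p0 : p != 0 by rewrite -size_poly_gt0 sp.
have : (0 < size r)%N by rewrite size_poly_gt0.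
by rewrite size_mul // sp; move: (size r); lia.
Qed.

Lemma cross_reduce a b c p1 p2 p3 q1 q2 q3 n mu :
  size p1 = mu.+1 -> (size p2 <= mu.+1)%N -> (size p3 <= mu.+1)%N ->
  (mu.*2 <= n)%N -> (size b <= n.+1)%N -> (size c <= n.+1)%N ->
  a = det2 p2 p3 q2 q3 -> b = det2 p3 p1 q3 q1 -> c = det2 p1 p2 q1 q2 ->
  exists r1 r2 r3,
    [/\ a = det2 p2 p3 r2 r3, b = det2 p3 p1 r3 r1, c = det2 p1 p2 r1 r2
      & [/\ size r1 <= (n - mu).+1, size r2 <= (n - mu).+1 & size r3 <= (n - mu).+1]%N].
Proof.
move=> sp1 sp2 sp3 mu_n sb sc ea eb ec.
(* reduce [q] by a multiple of [p] so that [r1 = q1 %% p1] *)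
set h := q1 %/ p1; set r1 := q1 - h * p1.
have sr1 : (size r1 <= mu)%N.
  have p10 : p1 != 0 by rewrite -size_poly_gt0 sp1.
  have -> : r1 = q1 %% p1 by rewrite /r1 {1}(divp_eq q1 p1) /h; ring.
  by rewrite -ltnS -sp1 ltn_modp.
have s_pr1 p : (size p <= mu.+1)%N -> (size (p * r1)%R <= n.+1)%N.
  move=> sp; apply: leq_trans (size_polyMleq _ _) _.
  by move: (size p) (size r1) sp sr1 mu_n; lia.
exists r1, (q2 - h * p2), (q3 - h * p3).
have n_mu : (n.+1 - mu = (n - mu).+1)%N by move: mu_n; lia.
split; rewrite ?ea ?eb ?ec /det2 /r1; try ring.
split; first by apply: leq_trans sr1 _; lia.
- rewrite -n_mu; apply: (size_cofactor_leq (s := p2 * r1)) sp1 _ (s_pr1 _ sp2).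
  suff -> : p1 * (q2 - h * p2) - p2 * r1 = c by [].
  by rewrite ec /r1 /det2; ring.
- rewrite -n_mu; apply: (size_cofactor_leq (s := p3 * r1)) sp1 _ (s_pr1 _ sp3).
  suff -> : p1 * (q3 - h * p3) - p3 * r1 = - b by rewrite size_polyN.
  by rewrite eb /r1 /det2; ring.
Qed.

Lemma syz_cross_decomposition n mu a b c :
  (mu.*2 <= n)%N -> inP n mu a b c ->
  exists p1 p2 p3 r1 r2 r3,
    [/\ deg3 p1 p2 p3 = mu, (deg3 r1 r2 r3 <= n - mu)%N
      & [/\ a = det2 p2 p3 r2 r3, b = det2 p3 p1 r3 r1 & c = det2 p1 p2 r1 r2]].
Proof.
move=> mu_n [_ _ dabc [[p1 [p2 [p3 [syzp [p0 dp]]]]] pmin]].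
have [x1 [x2 [x3 xp1]]] : exists x1 x2 x3, x1 * p1 + x2 * p2 + x3 * p3 = 1.
  by apply/gcd3_one_Bezout/(min_syz_primitive syzp p0); rewrite dp.
(* [p x ((a, b, c) x x) = (x.p) (a, b, c) - (p.(a, b, c)) x = (a, b, c)] *)
set q1 := det2 b c x2 x3; set q2 := det2 c a x3 x1; set q3 := det2 a b x1 x2.
have [ea eb ec] : [/\ a = det2 p2 p3 q2 q3, b = det2 p3 p1 q3 q1 & c = det2 p1 p2 q1 q2].
  have bac_cab v x : v * (x1 * p1 + x2 * p2 + x3 * p3) - x * (p1 * a + p2 * b + p3 * c) = v.
    by rewrite xp1 [_ + _ + _]syzp; ring.
  by split; [rewrite -{1}(bac_cab a x1) | rewrite -{1}(bac_cab b x2)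
    | rewrite -{1}(bac_cab c x3)]; rewrite /q1 /q2 /q3 /det2; ring.
have [sa sb sc] := size_leq_deg3 a b c; rewrite dabc in sa sb sc.
have [sp1 sp2 sp3] := size_leq_deg3 p1 p2 p3; rewrite dp in sp1 sp2 sp3.
suff [r1 [r2 [r3 [ea' eb' ec' [sr1 sr2 sr3]]]]] : exists r1 r2 r3,
    [/\ a = det2 p2 p3 r2 r3, b = det2 p3 p1 r3 r1, c = det2 p1 p2 r1 r2
      & [/\ size r1 <= (n - mu).+1, size r2 <= (n - mu).+1 & size r3 <= (n - mu).+1]%N].
  by exists p1, p2, p3, r1, r2, r3; rewrite deg3_leq sr1 sr2 sr3.
have : size p1 = mu.+1 \/ size p2 = mu.+1 \/ size p3 = mu.+1.
  have := triple_neq0 p0; move: sp1 sp2 sp3 dp; rewrite /deg3.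
  by move: (size p1) (size p2) (size p3); lia.
case=> [s1|[s2|s3]].
- exact: cross_reduce s1 sp2 sp3 mu_n sb sc ea eb ec.
- have [r2 [r3 [r1 [? ? ? [? ? ?]]]]] := cross_reduce s2 sp3 sp1 mu_n sc sa eb ec ea.
  by exists r1, r2, r3.
- have [r3 [r1 [r2 [? ? ? [? ? ?]]]]] := cross_reduce s3 sp1 sp2 mu_n sa sb ec ea eb.
  by exists r1, r2, r3.
Qed.

Lemma size_det2_lead r r' k :
  (size r <= k.+1)%N -> (size r' <= k.+1)%N ->
  (size (det2 (r`_k)%:P (r'`_k)%:P r r') <= k)%N.
Proof.
move=> sr sr'; apply: size_leq_coef0; last by rewrite coefB !coefCM mulrC subrr.
by apply: (size_det2 (s := 1)) => //; exact: size_polyC_leq1.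
Qed.

Lemma lead_combination_neq0 n mu a b c p1 p2 p3 r1 r2 r3 :
  gcd3_one a b c -> deg3 a b c = n -> c != 0 -> (mu.*2.+2 <= n)%N ->
  (deg3 p1 p2 p3 <= mu)%N -> (deg3 r1 r2 r3 <= n - mu)%N ->
  a = det2 p2 p3 r2 r3 -> b = det2 p3 p1 r3 r1 -> c = det2 p1 p2 r1 r2 ->
  (r1`_(n - mu))%:P * a + (r2`_(n - mu))%:P * b + (r3`_(n - mu))%:P * c != 0.
Proof.
move=> gabc dabc c0 mu_n dp dr ea eb ec; set k := (n - mu)%N.
have /and3P[sr1 sr2 sr3] : [&& size r1 <= k.+1, size r2 <= k.+1 & size r3 <= k.+1]%N.
  by rewrite -deg3_leq.
have pr0 : (det2 p2 p3 r2 r3, det2 p3 p1 r3 r1, det2 p1 p2 r1 r2) != (0, 0, 0).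
  by rewrite -ea -eb -ec; apply: contraNneq c0 => -[_ _ ->].
have k_gt0 : (0 < k)%N by rewrite /k; lia.
(* [L = (r1`_k, r2`_k, r3`_k)] is nonzero, or else [deg3 (p x r) < n]; a constant
   syzygy [L] would be parallel to both [p] and [r] by the degree bound *)
have [L0|L0] := eqVneq (r1`_k, r2`_k, r3`_k) (0, 0, 0).
  case: L0 => r1k r2k r3k; exfalso.
  have dr' : (deg3 r1 r2 r3 <= k.-1)%N.
    by rewrite deg3_leq prednK //; apply/and3P; split; exact: size_leq_coef0.
  have := deg3_cross p1 p2 p3 r1 r2 r3; rewrite -ea -eb -ec dabc.
  by move: dp dr' mu_n; rewrite /k; lia.
set L1 := (r1`_k)%:P; set L2 := (r2`_k)%:P; set L3 := (r3`_k)%:P.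
apply/negP => /eqP syzL.
have {}L0 : (L1, L2, L3) != (0, 0, 0).
  by apply: contraNneq L0 => -[/polyC_inj-> /polyC_inj-> /polyC_inj->].
have syzp : syz a b c p1 p2 p3 by rewrite /syz ea eb ec /det2; ring.
have syzr : syz a b c r1 r2 r3 by rewrite /syz ea eb ec /det2; ring.
have dL : deg3 L1 L2 L3 = 0%N by apply/eqP; rewrite -leqn0 deg3_leq !size_polyC_leq1.
have Lp0 : (det2 L2 L3 p2 p3, det2 L3 L1 p3 p1, det2 L1 L2 p1 p2) = (0, 0, 0).
  apply: cross_syz_eq0 gabc syzL syzp _; apply: leq_ltn_trans (deg3_cross _ _ _ _ _ _) _.
  by rewrite dL dabc; lia.
have Lr0 : (det2 L2 L3 r2 r3, det2 L3 L1 r3 r1, det2 L1 L2 r1 r2) = (0, 0, 0).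
  apply: cross_syz_eq0 gabc syzL syzr _; rewrite dabc.
  have : (deg3 (det2 L2 L3 r2 r3) (det2 L3 L1 r3 r1) (det2 L1 L2 r1 r2) <= k.-1)%N.
    by rewrite deg3_leq prednK //; apply/and3P; split; exact: size_det2_lead.
  by rewrite /k; lia.
by move: pr0; rewrite (cross_eq0_trans L0 Lp0 Lr0) eqxx.
Qed.

Lemma gcd3_one_common_root a b c (z : F) :
  gcd3_one a b c -> root a z -> root b z -> root c z -> False.
Proof.
rewrite /gcd3_one -size_poly_eq1 => /eqP gabc1 az bz cz.
have : ('X - z%:P) %| gcdp (gcdp a b) c by rewrite !dvdp_gcd !dvdp_XsubCl az bz cz.
by move/dvdp_leq; rewrite -size_poly_eq0 gabc1 size_XsubC => /(_ isT).
Qed.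

Lemma size_CXn_leq (x : F) m : (size (x%:P * 'X^m)%R <= m.+1)%N.
Proof.
apply: leq_trans (size_polyMleq _ _) _; rewrite size_polyXn.
by have := size_polyC_leq1 x; move: (size x%:P); lia.
Qed.

End Syzygies.

Section EpsilonDeformation.
Variable K : fieldType.
Implicit Types (x w : {poly K}) (A B C P Q R S : {poly {poly K}}).

Local Notation eps := (('X : {poly K})%:P).

Definition deform x w : {poly {poly K}} := x^:P + eps * w^:P.

Lemma size_over_frac P : size (over_frac P) = size P.
Proof. by rewrite size_map_inj_poly // => u v /eqP; rewrite tofrac_eq => /eqP. Qed.

Lemma over_frac_eq0 P : (over_frac P == 0) = (P == 0).
Proof. by rewrite -!size_poly_eq0 size_over_frac. Qed.

Lemma over_frac_det2 P Q R S :
  over_frac (det2 P Q R S) = det2 (over_frac P) (over_frac Q) (over_frac R) (over_frac S).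
Proof. by rewrite /over_frac /det2 rmorphB !rmorphM. Qed.

Lemma syz_over_frac A B C P Q R :
  P * A + Q * B + R * C = 0 -> syz (over_frac A) (over_frac B) (over_frac C)
                         (over_frac P) (over_frac Q) (over_frac R).
Proof. by rewrite /syz /over_frac -!rmorphM -!rmorphD => ->; rewrite rmorph0. Qed.

Lemma size_at_eps0 P : (size (at_eps0 P) <= size P)%N.
Proof. exact: size_poly. Qed.

Lemma deg3_at_eps0 A B C :
  (deg3 (at_eps0 A) (at_eps0 B) (at_eps0 C)
    <= deg3 (over_frac A) (over_frac B) (over_frac C))%N.
Proof.
rewrite /deg3 !size_over_frac.
have := size_at_eps0 A; have := size_at_eps0 B; have := size_at_eps0 C.
by move: (size (at_eps0 A)) (size (at_eps0 B)) (size (at_eps0 C)); lia.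
Qed.

Lemma at_eps0_deform x w : at_eps0 (deform x w) = x.
Proof.
apply/polyP => i; rewrite /at_eps0 coef_map_id0 ?horner0 // coefD coefCM !coef_map /=.
by rewrite hornerD hornerC hornerM hornerX mul0r addr0.
Qed.

Lemma size_deform x w s :
  (size x <= s)%N -> (size w <= s)%N -> (size (deform x w) <= s)%N.
Proof.
move=> sx sw; apply: leq_trans (size_polyD _ _) _.
by rewrite geq_max size_map_polyC size_Cmul ?polyX_eq0 // size_map_polyC sx.
Qed.

Lemma root_deform x w (z : K) : root (over_frac (deform x w)) (tofrac z%:P) -> root x z.
Proof.
rewrite /root /over_frac horner_map /= tofrac_eq0 => /eqP /(congr1 (coefp 0)) /=.
rewrite hornerD hornerM hornerC !horner_map /= coefD coefC coef0 /=.
by rewrite coefMC coefX mul0r addr0 => ->.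
Qed.

End EpsilonDeformation.

Lemma dvdp_over_frac_root (K : closedFieldType) (m : {poly K})
    (G : {poly {fraction {poly K}}}) :
  m != 0 -> G %| over_frac m^:P -> size G != 1%N -> exists z : K, root G (tofrac z%:P).
Proof.
move=> + + G_nunit; elim: {m}(size m) {-2}m (leqnn (size m)) => [|s IH] m sm m0 Gm.
  by move: sm; rewrite leqn0 size_poly_eq0 (negPf m0).
have m'0 : over_frac m^:P != 0 by rewrite over_frac_eq0 map_polyC_eq0.
have [/closed_rootP[z mz]|/negPn/eqP sm1] := boolP (size m != 1%N); last first.
  have := dvdp_leq m'0 Gm; rewrite size_over_frac size_map_polyC sm1.
  have : (0 < size G)%N.
    by rewrite size_poly_gt0; apply: contraNneq m'0 => G0; rewrite -(dvd0p _) -G0.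
  by move: G_nunit; move: (size G); lia.
have [rz|nrz] := boolP (root G (tofrac z%:P)); first by exists z.
have [m1 em] := factor_theorem _ _ mz.
have m10 : m1 != 0 by apply: contraNneq m0 => m10; rewrite em m10 mul0r.
apply: (IH m1) => //.
  by move: sm; rewrite em size_mul ?polyXsubC_eq0 // size_XsubC addn2; move: (size m1); lia.
rewrite -(Gauss_dvdpl _ (q := 'X - (tofrac z%:P)%:P)) ?coprimep_XsubC //.
suff <- : over_frac ('X - z%:P)^:P = 'X - (tofrac z%:P)%:P.
  by rewrite /over_frac -!rmorphM /= -em.
by rewrite /over_frac !rmorphB /= !map_polyX !map_polyC.
Qed.

Section Deformation.
Variables (K : closedFieldType) (n mu : nat) (a b c p1 p2 p3 r1 r2 r3 : {poly K}).
Hypotheses (mu_n : (mu.*2.+2 <= n)%N) (gabc : gcd3_one a b c) (dabc : deg3 a b c = n)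
  (c0 : c != 0).
Hypotheses (ea : a = det2 p2 p3 r2 r3) (eb : b = det2 p3 p1 r3 r1)
  (ec : c = det2 p1 p2 r1 r2).
Hypotheses (dp : (deg3 p1 p2 p3 <= mu)%N) (dr : (deg3 r1 r2 r3 <= n - mu)%N).

Local Notation k := (n - mu)%N.
Local Notation eps := (('X : {poly K})%:P).

Let u1 : {poly K} := (r1`_k)%:P * 'X^(mu.+1).
Let u2 : {poly K} := (r2`_k)%:P * 'X^(mu.+1).
Let u3 : {poly K} := (r3`_k)%:P * 'X^(mu.+1).
Let P1 := deform p1 u1.
Let P2 := deform p2 u2.
Let P3 := deform p3 u3.
Let V1 := det2 P2 P3 r2^:P r3^:P.
Let V2 := det2 P3 P1 r3^:P r1^:P.
Let V3 := det2 P1 P2 r1^:P r2^:P.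
Let Q1 := eps * r1^:P - 'X^(k - mu.+1) * P1.
Let Q2 := eps * r2^:P - 'X^(k - mu.+1) * P2.
Let Q3 := eps * r3^:P - 'X^(k - mu.+1) * P3.

Let V_deform :
  [/\ V1 = deform a (det2 u2 u3 r2 r3), V2 = deform b (det2 u3 u1 r3 r1)
    & V3 = deform c (det2 u1 u2 r1 r2)].
Proof.
by rewrite ea eb ec /V1 /V2 /V3 /P1 /P2 /P3 /deform /det2; split;
  rewrite !rmorphB !rmorphM /=; ring.
Qed.

Let size_p : [/\ size p1 <= mu.+1, size p2 <= mu.+1 & size p3 <= mu.+1]%N.
Proof. by apply/and3P; rewrite -deg3_leq. Qed.

Let size_r : [/\ size r1 <= k.+1, size r2 <= k.+1 & size r3 <= k.+1]%N.
Proof. by apply/and3P; rewrite -deg3_leq. Qed.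

Let size_u_cross_r (r r' : {poly K}) :
  (size r <= k.+1)%N -> (size r' <= k.+1)%N ->
  (size (det2 ((r`_k)%:P * 'X^(mu.+1)) ((r'`_k)%:P * 'X^(mu.+1)) r r') <= n.+1)%N.
Proof.
move=> sr sr'; have := size_det2_lead sr sr'.
have -> : det2 ((r`_k)%:P * 'X^(mu.+1)) ((r'`_k)%:P * 'X^(mu.+1)) r r' =
    'X^(mu.+1) * det2 (r`_k)%:P (r'`_k)%:P r r' by rewrite /det2; ring.
move=> sL; apply: leq_trans (size_polyMleq _ _) _; rewrite size_polyXn.
by move: (size (det2 (r`_k)%:P (r'`_k)%:P r r')) sL mu_n; lia.
Qed.

Let size_Q (p r : {poly K}) :
  (size p <= mu.+1)%N -> (size r <= k.+1)%N ->
  (size (eps * r^:P - 'X^(k - mu.+1) * deform p ((r`_k)%:P * 'X^(mu.+1)))%R <= k)%N.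
Proof.
move=> sp sr.
(* the terms of degree [k] in [t] cancel *)
have -> : eps * r^:P - 'X^(k - mu.+1) * deform p ((r`_k)%:P * 'X^(mu.+1)) =
    eps * (r - (r`_k)%:P * 'X^k)^:P - ('X^(k - mu.+1) * p)^:P.
  have -> : 'X^k = 'X^(k - mu.+1) * 'X^(mu.+1) :> {poly K}.
    by rewrite -exprD subnK //; lia.
  by rewrite /deform !rmorphB !rmorphM /= !map_polyXn; ring.
apply: leq_trans (size_polyD _ _) _.
rewrite size_polyN geq_max size_Cmul ?polyX_eq0 // !size_map_polyC; apply/andP; split.
  apply: size_leq_coef0; last by rewrite coefB coefCM coefXn eqxx mulr1 subrr.
  apply: leq_trans (size_polyD _ _) _; rewrite size_polyN geq_max sr.
  exact: size_CXn_leq.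
apply: leq_trans (size_polyMleq _ _) _; rewrite size_polyXn.
by move: (size p) sp mu_n; lia.
Qed.

Let lead_neq0 := lead_combination_neq0 gabc dabc c0 mu_n dp dr ea eb ec.

Let syz_P : P1 * V1 + P2 * V2 + P3 * V3 = 0.
Proof. by rewrite /V1 /V2 /V3 /det2; ring. Qed.

Let syz_Q : Q1 * V1 + Q2 * V2 + Q3 * V3 = 0.
Proof. by rewrite /Q1 /Q2 /Q3 /V1 /V2 /V3 /det2; ring. Qed.

Let cross_PQ :
  [/\ det2 P2 P3 Q2 Q3 = eps * V1, det2 P3 P1 Q3 Q1 = eps * V2
    & det2 P1 P2 Q1 Q2 = eps * V3].
Proof. by split; rewrite /Q1 /Q2 /Q3 /V1 /V2 /V3 /det2; ring. Qed.

Let dot_pV :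
  p1^:P * V1 + p2^:P * V2 + p3^:P * V3 =
  - (eps * ('X^(mu.+1) * ((r1`_k)%:P * a + (r2`_k)%:P * b + (r3`_k)%:P * c))^:P).
Proof.
rewrite ea eb ec /V1 /V2 /V3 /P1 /P2 /P3 /u1 /u2 /u3 /deform /det2.
by rewrite !(rmorphD, rmorphB, rmorphM) /=; ring.
Qed.

Let gcd_V : gcd3_one (over_frac V1) (over_frac V2) (over_frac V3).
Proof.
rewrite /gcd3_one -size_poly_eq1; apply/negP => /negP G_nunit.
set G := gcdp (gcdp _ _) _ in G_nunit.
have [G1 G2 G3] : [/\ G %| over_frac V1, G %| over_frac V2 & G %| over_frac V3].
  by split; rewrite ?dvdp_gcdr //; apply: dvdp_trans (dvdp_gcdl _ _) _;
    rewrite ?dvdp_gcdl ?dvdp_gcdr.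
set m := 'X^(mu.+1) * ((r1`_k)%:P * a + (r2`_k)%:P * b + (r3`_k)%:P * c).
have m0 : m != 0 by rewrite mulf_neq0 ?lead_neq0 // expf_neq0 // polyX_eq0.
have Gm : G %| over_frac m^:P.
  have : G %| over_frac (p1^:P * V1 + p2^:P * V2 + p3^:P * V3).
    rewrite /over_frac !rmorphD !rmorphM /=.
    by rewrite !dvdp_add ?dvdp_mull.
  rewrite dot_pV /over_frac rmorphN /= dvdpNr rmorphM /= map_polyC /= mul_polyC.
  by rewrite dvdpZr // tofrac_eq0 polyX_eq0.
have [z Gz] := dvdp_over_frac_root m0 Gm G_nunit.
have [V1d V2d V3d] := V_deform.
apply: (gcd3_one_common_root (z := z) gabc).
- by apply: (root_deform (w := det2 u2 u3 r2 r3)); rewrite -V1d; exact: root_dvdp G1 Gz.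
- by apply: (root_deform (w := det2 u3 u1 r3 r1)); rewrite -V2d; exact: root_dvdp G2 Gz.
- by apply: (root_deform (w := det2 u1 u2 r1 r2)); rewrite -V3d; exact: root_dvdp G3 Gz.
Qed.

Let deg_V : deg3 (over_frac V1) (over_frac V2) (over_frac V3) = n.
Proof.
have [-> -> ->] := V_deform; have [sr1 sr2 sr3] := size_r.
have [sa sb sc] := size_leq_deg3 a b c; rewrite dabc in sa sb sc.
apply/eqP; rewrite eqn_leq; apply/andP; split.
  rewrite deg3_leq !size_over_frac; apply/and3P; split; apply: size_deform => //;
  exact: size_u_cross_r.
by have := deg3_at_eps0 (deform a (det2 u2 u3 r2 r3)) (deform b (det2 u3 u1 r3 r1))
  (deform c (det2 u1 u2 r1 r2)); rewrite !at_eps0_deform dabc.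
Qed.

Let class_V : is_class (over_frac V1) (over_frac V2) (over_frac V3) mu.+1.
Proof.
have [sp1 sp2 sp3] := size_p; have [sr1 sr2 sr3] := size_r.
apply: (is_class_of_cross gcd_V (syz_over_frac syz_P) (syz_over_frac syz_Q)).
- have V30 : V3 != 0.
    have [_ _ ->] := V_deform; apply/eqP => /(congr1 (@at_eps0 _)).
    by rewrite at_eps0_deform /at_eps0 map_poly0; apply/eqP.
  rewrite -!over_frac_det2; have [-> -> ->] := cross_PQ.
  apply: contraNneq V30 => -[_ _ /eqP].
  by rewrite over_frac_eq0 mulf_eq0 polyC_eq0 polyX_eq0.
- rewrite deg3_leq !size_over_frac; apply/and3P; split; apply: size_deform;
    by rewrite ?size_CXn_leq // ltnW.
- by rewrite deg_V; lia.
- have : (deg3 (over_frac Q1) (over_frac Q2) (over_frac Q3) <= k.-1)%N.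
    by rewrite deg3_leq prednK ?subn_gt0 ?size_over_frac ?size_Q //; lia.
  by rewrite deg_V; lia.
Qed.

Lemma deformation_spec :
  [/\ gcd3_one (over_frac V1) (over_frac V2) (over_frac V3),
      deg3 (over_frac V1) (over_frac V2) (over_frac V3) = n,
      is_class (over_frac V1) (over_frac V2) (over_frac V3) mu.+1 &
      (at_eps0 V1, at_eps0 V2, at_eps0 V3) = (a, b, c)].
Proof.
split; [exact: gcd_V | exact: deg_V | exact: class_V |].
by have [-> -> ->] := V_deform; rewrite !at_eps0_deform.
Qed.

End Deformation.

Theorem theorem1p2 (K : closedFieldType) (n mu : nat) (a b c : {poly K}) :
  (1 <= n)%N -> (mu < n./2)%N -> inP n mu a b c ->
  exists ae be ce : {poly {poly K}},
    [/\ gcd3_one (over_frac ae) (over_frac be) (over_frac ce),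
        deg3 (over_frac ae) (over_frac be) (over_frac ce) = n,
        is_class (over_frac ae) (over_frac be) (over_frac ce) mu.+1 &
        (at_eps0 ae, at_eps0 be, at_eps0 ce) = (a, b, c)].
Proof.
move=> _ mu_half abc; have mu_n : (mu.*2.+2 <= n)%N by lia.
have [c0 gabc dabc _] := abc.
have [p1 [p2 [p3 [r1 [r2 [r3 [dp dr [ea eb ec]]]]]]]] :=
  syz_cross_decomposition (ltnW (ltnW mu_n)) abc.
eexists _, _, _; exact: deformation_spec mu_n gabc dabc c0 ea eb ec (eq_leq dp) dr.
Qed.
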